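(* Let $A,B$ be finite-dimensional $K$-subspaces of $L$ and set $D=A_*^{-1}A\cap BB_*^{-1}$. Suppose that $AD\not\subset A$ or $DB\not\subset B$. Then there exist $K$-subspaces $A_1,B_1$ of $L$ such that: (1) $A_1\neq\{0\}$ and $B_1\neq\{0\}$; (2) $\langle A_1B_1\rangle\subset\langle AB\rangle$; (3) either $\dim_KA_1+\dim_KB_1=\dim_KA+\dim_KB$ and $\dim_KA_1>\dim_KA$, or $\dim_KA_1+\dim_KB_1>\dim_KA+\dim_KB$.
   Context: $K$ is a commutative field and $L$ is a (possibly noncommutative) division ring containing $K$ in its center. For $S\subset L$, $\langle S\rangle$ denotes the $K$-subspace of $L$ spanned by $S$. For subsets $S_1,S_2,\dots$ of $L$, $S_1S_2=\{s_1s_2\mid s_1\in S_1,s_2\in S_2\}$ (product set), and similarly for more factors. For $X\subset L$, $X_*=X\setminus\{0\}$ and $X_*^{-1}=\{x^{-1}\mid x\in X_*\}$. *)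

From HB Require Import structures.
From mathcomp Require Import all_boot all_order all_algebra.
Set Implicit Arguments. Unset Strict Implicit. Unset Printing Implicit Defensive.
Import Order.TTheory GRing.Theory.
Local Open Scope ring_scope.

(* L is a K-algebra (scalars of K central, since algType means scaling
   associates on both sides) with inverses; the division-ring hypothesis is
   stated in the theorem. *)

Section Defs.
Variables (K : fieldType) (L : unitAlgType K).

Definition span_seq (s : seq L) (x : L) : Prop :=
  exists c : 'I_(size s) -> K, x = \sum_(i < size s) c i *: s`_i.

Definition lin_free (s : seq L) : Prop :=
  forall c : 'I_(size s) -> K,
    \sum_(i < size s) c i *: s`_i = 0 -> forall i, c i = 0.

Definition gen (S : L -> Prop) (x : L) : Prop :=
  exists s : seq L, (forall y, y \in s -> S y) /\ span_seq s x.

Definition is_subspace (A : L -> Prop) : Prop :=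
  A 0 /\ forall (k : K) (x y : L), A x -> A y -> A (k *: x + y).

Definition has_dim (A : L -> Prop) (n : nat) : Prop :=
  exists s : seq L, size s = n /\ lin_free s /\ (forall x, A x <-> span_seq s x).

Definition prodset (S1 S2 : L -> Prop) (x : L) : Prop :=
  exists a b, S1 a /\ S2 b /\ x = a * b.

Definition Dset (A B : L -> Prop) (d : L) : Prop :=
  (exists a1 a2, A a1 /\ a1 != 0 /\ A a2 /\ d = a1^-1 * a2) /\
  (exists b1 b2, B b1 /\ B b2 /\ b2 != 0 /\ d = b1 * b2^-1).

Definition subset_of (S T : L -> Prop) : Prop := forall x, S x -> T x.

Definition nonzero_space (A : L -> Prop) : Prop := exists x, A x /\ x != 0.

End Defs.

From HB Require Import structures.
From mathcomp Require Import all_boot all_order all_algebra zify.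
From Stdlib Require Import Classical.
Set Implicit Arguments. Unset Strict Implicit. Unset Printing Implicit Defensive.
Import Order.TTheory GRing.Theory.
Local Open Scope ring_scope.

(* Pick d in D with A d ⊄ A or d B ⊄ B; it is invertible.  Consider
   the two exchanged pairs
       (A1, B1) = (A + A d, B ∩ d^-1 B),    (A2, B2) = ((A ∩ A d) d^-1, d B + B).
   Their products stay in <A B> because (a d)(d^-1 b) = a b, and all four
   spaces are nonzero because d = a1^-1 a2 = b1 b2^-1 with a1, b2 nonzero.
   By Grassmann's formula and invariance of dimension under translation,
   dim A1 + dim A2 = 2 dim A and dim B1 + dim B2 = 2 dim B, while A1 ⊋ A or
   B2 ⊋ B.  Hence either one pair has dimension sum > dim A + dim B, or both
   pairs tie and then dim A1 > dim A. *)

Section FiniteDimensionalSubspaces.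
Variables (K : fieldType) (L : unitAlgType K).
Implicit Types (s t : seq L) (x y : L) (U V G : L -> Prop).

(* K-linear combinations with coefficients indexed by nat rather than by
   'I_(size s): the coefficients no longer depend on the length of the
   family, which makes cons, concatenation and map easy to handle. *)
Definition comb s (c : nat -> K) : L := \sum_(i < size s) c i *: s`_i.
Definition nspan s x : Prop := exists c, x = comb s c.
Definition nfree s : Prop :=
  forall c, comb s c = 0 -> forall i, (i < size s)%N -> c i = 0.

Definition ext_coef n (c : 'I_n -> K) (j : nat) : K :=
  if insub j is Some i then c i else 0.

Lemma ext_coefE n (c : 'I_n -> K) (i : 'I_n) : ext_coef c i = c i.
Proof. by rewrite /ext_coef valK. Qed.

Lemma sum_ext_coef (V : lmodType K) (s : seq V) (c : 'I_(size s) -> K) :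
  \sum_(i < size s) ext_coef c i *: s`_i = \sum_(i < size s) c i *: s`_i.
Proof. by apply: eq_bigr => i _; rewrite ext_coefE. Qed.

Lemma span_seqE s x : span_seq s x <-> nspan s x.
Proof.
split=> [[c ->]|[c ->]]; first by exists (ext_coef c); rewrite /comb sum_ext_coef.
by exists (fun i => c i).
Qed.

Lemma lin_freeE s : lin_free s <-> nfree s.
Proof.
split=> [free_s c c0 i lt_i_s|free_s c c0 i].
  exact: (free_s (fun j => c j) c0 (Ordinal lt_i_s)).
by rewrite -ext_coefE; apply: free_s (ltn_ord i); rewrite /comb sum_ext_coef.
Qed.

Lemma has_dimE U m : has_dim U m <->
  exists s, size s = m /\ nfree s /\ (forall x, U x <-> nspan s x).
Proof.
split=> -[s [size_s [free_s span_s]]]; exists s; split=> //.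
  by split=> [|x]; [apply/lin_freeE | rewrite span_s span_seqE].
by split=> [|x]; [apply/lin_freeE | rewrite span_s span_seqE].
Qed.

Lemma subspace_add G x y : is_subspace G -> G x -> G y -> G (x + y).
Proof. by move=> [_ GD] Gx Gy; rewrite -[x]scale1r; apply: GD. Qed.

Lemma subspace_sum G n (F : 'I_n -> L) :
  is_subspace G -> (forall i, G (F i)) -> G (\sum_(i < n) F i).
Proof.
by move=> sG GF; apply: big_ind => // [|x y]; [case: sG | apply: subspace_add].
Qed.

Lemma nspan_subspace s : is_subspace (nspan s).
Proof.
split; first by exists (fun _ => 0); rewrite /comb big1 // => i _; rewrite scale0r.
move=> k x y [c ->] [c' ->]; exists (fun i => k * c i + c' i).
rewrite /comb scaler_sumr -big_split; apply: eq_bigr => i _.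
by rewrite scalerDl scalerA.
Qed.

Lemma nspan_mem s x : x \in s -> nspan s x.
Proof.
move=> s_x; exists (fun j => (j == index x s)%:R).
have lt_x_s : (index x s < size s)%N by rewrite index_mem.
rewrite /comb (bigD1 (Ordinal lt_x_s)) //= eqxx nth_index //.
by rewrite scale1r big1 ?addr0 // => j; rewrite -val_eqE /= => /negbTE->; rewrite scale0r.
Qed.

Lemma nspan_min G s x :
  is_subspace G -> (forall y, y \in s -> G y) -> nspan s x -> G x.
Proof.
move=> sG Gs [c ->]; apply: subspace_sum => // i.
case: sG => G0 GD; rewrite -[_ *: _]addr0; apply: GD => //.
by apply: Gs; apply: mem_nth.
Qed.

Lemma nspan_sub s t :
  (forall y, y \in s -> nspan t y) -> forall x, nspan s x -> nspan t x.
Proof. by move=> st x; apply: nspan_min => //; exact: nspan_subspace. Qed.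

Lemma comb_cons x s c :
  comb (x :: s) c = c 0%N *: x + comb s (fun i => c i.+1).
Proof. by rewrite /comb big_ord_recl. Qed.

Lemma nspan_cons x s y : nspan s y -> nspan (x :: s) y.
Proof.
move=> [c ->]; exists (fun i => if i is j.+1 then c j else 0).
by rewrite comb_cons scale0r add0r.
Qed.

Lemma nfree_cons x t : nfree t -> ~ nspan t x -> nfree (x :: t).
Proof.
move=> free_t t'x c; rewrite comb_cons => c0.
have c00 : c 0%N = 0.
  apply/eqP; apply: contraT => nz; exfalso; apply: t'x.
  exists (fun i => - ((c 0%N)^-1 * c i.+1)).
  have -> : x = (c 0%N)^-1 *: (c 0%N *: x) by rewrite scalerA mulVf ?scale1r.
  move/eqP: c0; rewrite addr_eq0 => /eqP ->.
  rewrite scalerN /comb scaler_sumr -sumrN; apply: eq_bigr => i _.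
  by rewrite scalerA scaleNr.
rewrite c00 scale0r add0r in c0.
by case=> [//|i] lt_i_t; exact: (free_t _ c0 i lt_i_t).
Qed.

Lemma extract_basis S : exists t, nfree t /\ (forall x, nspan S x <-> nspan t x).
Proof.
elim: S => [|x S [t [free_t eq_St]]]; first by exists [::]; split=> // c _ i.
have sub_t y : y \in S -> nspan t y by move/nspan_mem/eq_St.
have sub_S y : y \in t -> nspan S y by move/nspan_mem/eq_St.
case: (classic (nspan t x)) => [t_x|t'x].
  exists t; split=> // y; split; apply: nspan_sub => z.
    by rewrite inE => /predU1P [-> //|/sub_t].
  by move/sub_S/nspan_cons.
exists (x :: t); split=> [|y]; first exact: nfree_cons.
split; apply: nspan_sub => z; rewrite inE => /predU1P [->|].
- exact/nspan_mem/mem_head.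
- by move/sub_t/nspan_cons.
- exact/nspan_mem/mem_head.
- by move/sub_S/nspan_cons.
Qed.

(* Coordinates with respect to a free family t: the space spanned by t is
   identified with 'rV_(size t) through the injective linear map [coord_map],
   so that subspaces of it can be handled with the theory of {vspace _}. *)
Section Coordinates.
Variable t : seq L.
Hypothesis free_t : nfree t.
Local Notation n := (size t).

Definition coord_map (v : 'rV[K]_n) : L := \sum_(i < n) v 0 i *: t`_i.

Fact coord_map_is_linear : linear coord_map.
Proof.
move=> k v w; rewrite /coord_map scaler_sumr -big_split; apply: eq_bigr => i _.
by rewrite !mxE scalerDl scalerA.
Qed.
HB.instance Definition _ :=
  GRing.isLinear.Build K 'rV[K]_n L _ coord_map coord_map_is_linear.

Lemma coord_map_inj : injective coord_map.
Proof.
move=> v w eq_vw; apply/rowP => i; apply/eqP; rewrite -subr_eq0; apply/eqP.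
have /lin_freeE free_t' := free_t.
have -> : v 0 i - w 0 i = (v - w) 0 i by rewrite !mxE.
apply: (free_t' (fun j => (v - w) 0 j)).
by rewrite -[RHS](subrr (coord_map w)) -{1}eq_vw -linearB.
Qed.

Lemma nspan_coord x : nspan t x <-> exists v, x = coord_map v.
Proof.
split=> [[c ->]|[v ->]]; first by exists (\row_i c i); apply: eq_bigr => i _; rewrite mxE.
by exists (ext_coef (fun i => v 0 i)); rewrite /comb sum_ext_coef.
Qed.

Lemma coord_seq u : (forall y, y \in u -> nspan t y) ->
  exists w : seq 'rV[K]_n, u = map coord_map w.
Proof.
elim: u => [|x u IH] tu; first by exists [::].
have [w ->] : exists w, u = map coord_map w.
  by apply: IH => y uy; apply: tu; rewrite inE uy orbT.
have [v ->] := proj1 (nspan_coord x) (tu x (mem_head _ _)).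
by exists (v :: w).
Qed.

Definition img (W : {vspace 'rV[K]_n}) x : Prop :=
  exists2 v, v \in W & x = coord_map v.

Lemma comb_map (w : seq 'rV[K]_n) c :
  comb (map coord_map w) c = coord_map (\sum_(i < size w) c i *: w`_i).
Proof.
rewrite /comb linear_sum size_map; apply: eq_bigr => i _.
by rewrite linearZ (nth_map 0).
Qed.

Lemma nspan_map (w : seq 'rV[K]_n) x : nspan (map coord_map w) x <-> img <<w>> x.
Proof.
split=> [[c ->]|[v w_v ->]].
  exists (\sum_(i < size w) c i *: w`_i); last exact: comb_map.
  by apply: rpred_sum => i _; apply/rpredZ/memv_span/mem_nth.
exists (ext_coef (fun i => coord (in_tuple w) i v)).
by rewrite comb_map sum_ext_coef -(coord_span (X := in_tuple w) w_v).
Qed.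

Lemma nfree_map (w : seq 'rV[K]_n) : nfree (map coord_map w) <-> free w.
Proof.
split=> [free_w|/(@freeP _ _ _ (in_tuple w)) free_w c c0 i].
  apply/(@freeP _ _ _ (in_tuple w)) => k k0 i; rewrite -ext_coefE.
  apply: (free_w (ext_coef k)); last by rewrite size_map.
  by rewrite comb_map sum_ext_coef k0 linear0.
rewrite size_map => lt_i_w.
rewrite -[c i]/((fun j : 'I_(size w) => c j) (Ordinal lt_i_w)).
by apply: free_w; apply: coord_map_inj; rewrite linear0 -c0 comb_map.
Qed.

Lemma img_addv W1 W2 x :
  img (W1 + W2)%VS x <-> exists y z, img W1 y /\ img W2 z /\ x = y + z.
Proof.
split=> [[v /memv_addP [v1 W1v1 [v2 W2v2 ->]] ->]|].
  exists (coord_map v1), (coord_map v2); rewrite linearD.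
  by do !split; [exists v1|exists v2].
move=> [y [z [[v1 W1v1 ->] [[v2 W2v2 ->] ->]]]].
by exists (v1 + v2); rewrite ?linearD ?memv_add.
Qed.

Lemma img_capv W1 W2 x : img (W1 :&: W2)%VS x <-> img W1 x /\ img W2 x.
Proof.
split=> [[v /memv_capP [W1v W2v] ->]|]; first by split; exists v.
move=> [[v1 W1v1 ->] [v2 W2v2 /coord_map_inj eq_v12]].
by exists v1; rewrite // memv_cap W1v1 eq_v12.
Qed.

Lemma img_subv W1 W2 : (forall x, img W1 x -> img W2 x) -> (W1 <= W2)%VS.
Proof.
move=> sub12; apply/subvP => v W1v.
by have [w W2w /coord_map_inj ->] := sub12 _ (ex_intro2 _ _ v W1v erefl).
Qed.

Lemma has_dim_img W : has_dim (img W) (\dim W).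
Proof.
apply/has_dimE; exists (map coord_map (vbasis W)); rewrite size_map size_tuple.
split=> //; split; first by apply/nfree_map; exact: basis_free (vbasisP W).
by move=> x; rewrite nspan_map (span_basis (vbasisP W)).
Qed.

Lemma coord_subspace s : nfree s -> (forall y, y \in s -> nspan t y) ->
  exists W : {vspace 'rV[K]_n}, \dim W = size s /\ forall x, nspan s x <-> img W x.
Proof.
move=> free_s /coord_seq [w eq_s]; rewrite {s}eq_s in free_s *.
exists <<w>>%VS; rewrite size_map.
have /eqP -> : free w by apply/nfree_map.
by split=> // x; rewrite nspan_map.
Qed.

End Coordinates.

Lemma common_coordinates U V m k : has_dim U m -> has_dim V k ->
  exists t, nfree t /\ exists W1 W2 : {vspace 'rV[K]_(size t)},
    [/\ \dim W1 = m, \dim W2 = k,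
        forall x, U x <-> img W1 x & forall x, V x <-> img W2 x].
Proof.
move=> /has_dimE [su [<- [free_su span_su]]] /has_dimE [sv [<- [free_sv span_sv]]].
have [t [free_t span_t]] := extract_basis (su ++ sv).
have t_su y : y \in su -> nspan t y.
  by move=> su_y; apply/span_t/nspan_mem; rewrite mem_cat su_y.
have t_sv y : y \in sv -> nspan t y.
  by move=> sv_y; apply/span_t/nspan_mem; rewrite mem_cat sv_y orbT.
have [W1 [dimW1 span_W1]] := coord_subspace free_t free_su t_su.
have [W2 [dimW2 span_W2]] := coord_subspace free_t free_sv t_sv.
exists t; split=> //; exists W1, W2; split=> // x.
  by rewrite span_su span_W1.
by rewrite span_sv span_W2.
Qed.

Definition addP U V x : Prop := exists y z, U y /\ V z /\ x = y + z.
Definition capP U V x : Prop := U x /\ V x.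

Lemma has_dim_ext U V m : (forall x, U x <-> V x) -> has_dim U m -> has_dim V m.
Proof.
move=> eqUV [s [size_s [free_s span_s]]]; exists s; split=> //; split=> // x.
by rewrite -eqUV span_s.
Qed.

Lemma grassmann U V m k : has_dim U m -> has_dim V k ->
  exists p q, [/\ has_dim (addP U V) p, has_dim (capP U V) q & (p + q = m + k)%N].
Proof.
move=> dimU dimV.
have [t [free_t [W1 [W2 [<- <- U_W1 V_W2]]]]] := common_coordinates dimU dimV.
exists (\dim (W1 + W2)), (\dim (W1 :&: W2)); split; last exact: dimv_sum_cap.
  apply: has_dim_ext (has_dim_img free_t _) => x; rewrite img_addv.
  split=> -[y [z [Uy [Vz ->]]]]; exists y, z.
    by rewrite U_W1 V_W2.
  by rewrite -U_W1 -V_W2.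
apply: has_dim_ext (has_dim_img free_t _) => x; rewrite (img_capv free_t) /capP.
by rewrite U_W1 V_W2.
Qed.

Lemma has_dim_proper U V m k : has_dim U m -> has_dim V k ->
  subset_of U V -> ~ subset_of V U -> (m < k)%N.
Proof.
move=> dimU dimV UV nVU.
have [t [free_t [W1 [W2 [<- <- U_W1 V_W2]]]]] := common_coordinates dimU dimV.
have W12 : (W1 <= W2)%VS.
  by apply: (img_subv free_t) => x /(U_W1 x).2 /UV /(V_W2 x).1.
rewrite ltnNge; apply/negP => dimW21; apply: nVU => x /(V_W2 x).1.
have eqW12 : W1 = W2 by apply/eqP; rewrite eqEdim W12 dimW21.
by rewrite -eqW12 => /(U_W1 x).2.
Qed.

End FiniteDimensionalSubspaces.

Section TranslatesAndGeneratedSpaces.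
Variables (K : fieldType) (L : unitAlgType K).
Implicit Types (s : seq L) (x y e : L) (U V S : L -> Prop).

(* Preimages of U under right and left multiplication by e; for a unit e these
   are the translates U e^-1 and e^-1 U. *)
Definition rpre U e z : Prop := U (z * e).
Definition lpre e U z : Prop := U (e * z).

Lemma addP_subspace U V : is_subspace U -> is_subspace V -> is_subspace (addP U V).
Proof.
move=> [U0 UD] [V0 VD]; split; first by exists 0, 0; rewrite addr0.
move=> k _ _ [x1 [x2 [Ux1 [Vx2 ->]]]] [y1 [y2 [Uy1 [Vy2 ->]]]].
exists (k *: x1 + y1), (k *: x2 + y2); do !split; [exact: UD | exact: VD |].
by rewrite scalerDr addrACA.
Qed.

Lemma capP_subspace U V : is_subspace U -> is_subspace V -> is_subspace (capP U V).
Proof. by move=> [U0 UD] [V0 VD]; split=> // k x y [Ux Vx] [Uy Vy]; split; auto. Qed.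

Lemma rpre_subspace U e : is_subspace U -> is_subspace (rpre U e).
Proof.
move=> [U0 UD]; split; first by rewrite /rpre mul0r.
by move=> k x y Uxe Uye; rewrite /rpre mulrDl -scalerAl; apply: UD.
Qed.

Lemma lpre_subspace e U : is_subspace U -> is_subspace (lpre e U).
Proof.
move=> [U0 UD]; split; first by rewrite /lpre mulr0.
by move=> k x y Uex Uey; rewrite /lpre mulrDr -scalerAr; apply: UD.
Qed.

Lemma comb_mulr s a c : comb (map (fun y => y * a) s) c = comb s c * a.
Proof.
rewrite /comb size_map mulr_suml; apply: eq_bigr => i _.
by rewrite (nth_map 0) // scalerAl.
Qed.

Lemma comb_mull s a c : comb (map (fun y => a * y) s) c = a * comb s c.
Proof.
rewrite /comb size_map mulr_sumr; apply: eq_bigr => i _.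
by rewrite (nth_map 0) // scalerAr.
Qed.

Lemma has_dim_rpre U m e : e \is a GRing.unit -> has_dim U m -> has_dim (rpre U e) m.
Proof.
move=> e_unit /has_dimE [s [<- [free_s span_s]]]; apply/has_dimE.
exists (map (fun y => y * e^-1) s); rewrite size_map; split=> //; split.
  move=> c; rewrite comb_mulr size_map => c0; apply: free_s.
  by rewrite -[LHS](divrK e_unit) c0 mul0r.
move=> z; rewrite /rpre span_s; split=> -[c ec].
  by exists c; rewrite comb_mulr -ec mulrK.
by exists c; rewrite ec comb_mulr divrK.
Qed.

Lemma has_dim_lpre U m e : e \is a GRing.unit -> has_dim U m -> has_dim (lpre e U) m.
Proof.
move=> e_unit /has_dimE [s [<- [free_s span_s]]]; apply/has_dimE.
exists (map (fun y => e^-1 * y) s); rewrite size_map; split=> //; split.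
  move=> c; rewrite comb_mull size_map => c0; apply: free_s.
  by rewrite -[LHS](mulVKr e_unit) c0 mulr0.
move=> z; rewrite /lpre span_s; split=> -[c ec].
  by exists c; rewrite comb_mull -ec mulKr.
by exists c; rewrite ec comb_mull mulVKr.
Qed.

Lemma gen_subspace S : is_subspace (gen S).
Proof.
split; first by exists [::]; split=> //; exists (fun _ => 0); rewrite big_ord0.
move=> k x y [s1 [S_s1 /span_seqE s1x]] [s2 [S_s2 /span_seqE s2y]].
exists (s1 ++ s2); split; first by move=> z; rewrite mem_cat => /orP [/S_s1|/S_s2].
have sub_s12 s' : {subset s' <= s1 ++ s2} -> forall z, nspan s' z -> nspan (s1 ++ s2) z.
  by move=> ss'; apply: nspan_sub => z /ss' /nspan_mem.
apply/span_seqE; case: (nspan_subspace (s1 ++ s2)) => _; apply.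
  by apply: sub_s12 s1x => z; rewrite mem_cat => ->.
by apply: sub_s12 s2y => z; rewrite mem_cat orbC => ->.
Qed.

Lemma gen_mem S x : S x -> gen S x.
Proof.
move=> Sx; exists [:: x]; split; first by move=> y; rewrite inE => /eqP ->.
by apply/span_seqE/nspan_mem/mem_head.
Qed.

Lemma gen_min S G : is_subspace G -> (forall x, S x -> G x) -> subset_of (gen S) G.
Proof.
move=> sG SG x [s [S_s /span_seqE s_x]].
by apply: nspan_min s_x => // y /S_s /SG.
Qed.

End TranslatesAndGeneratedSpaces.

Section Exchange.
Variables (K : fieldType) (L : unitAlgType K).
Implicit Types (A B : L -> Prop) (d : L).

Lemma not_subset_witness (S T : L -> Prop) :
  ~ subset_of S T -> exists2 x, S x & ~ T x.
Proof.
move=> nST; apply: NNPP => none; apply: nST => x Sx.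
by apply: NNPP => T'x; apply: none; exists x.
Qed.

Lemma unstable_witness A B :
  (forall x : L, x != 0 -> x \is a GRing.unit) -> is_subspace A -> is_subspace B ->
  ~ subset_of (prodset A (Dset A B)) A \/ ~ subset_of (prodset (Dset A B) B) B ->
  exists d, [/\ Dset A B d, d \is a GRing.unit &
    ~ subset_of (rpre A d^-1) A \/ ~ subset_of (lpre d^-1 B) B].
Proof.
move=> Ldiv [A0 _] [B0 _] [unstableA|unstableB].
  have [_ [a [d [Aa [Dd ->]]]] A'ad] := not_subset_witness unstableA.
  have d_unit : d \is a GRing.unit.
    by apply: Ldiv; apply/eqP => d0; apply: A'ad; rewrite d0 mulr0.
  by exists d; split=> //; left=> Ad; apply: A'ad; apply: Ad; rewrite /rpre mulrK.
have [_ [d [b [Dd [Bb ->]]]] B'db] := not_subset_witness unstableB.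
have d_unit : d \is a GRing.unit.
  by apply: Ldiv; apply/eqP => d0; apply: B'db; rewrite d0 mul0r.
by exists d; split=> //; right=> dB; apply: B'db; apply: dB; rewrite /lpre mulKr.
Qed.

(* For a unit d, the subspaces A + A d, A ∩ A d, B + d^-1 B and B ∩ d^-1 B. *)
Definition sum_rtrans A d := addP A (rpre A d^-1).
Definition cap_rtrans A d := capP A (rpre A d^-1).
Definition sum_ltrans d B := addP B (lpre d B).
Definition cap_ltrans d B := capP B (lpre d B).

Variables (A B : L -> Prop) (d : L).
Hypotheses (sA : is_subspace A) (sB : is_subspace B) (d_unit : d \is a GRing.unit).

Lemma exchange_subspaces :
  [/\ is_subspace (sum_rtrans A d), is_subspace (rpre (cap_rtrans A d) d),
      is_subspace (lpre d^-1 (sum_ltrans d B)) & is_subspace (cap_ltrans d B)].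
Proof.
have sAd := rpre_subspace d^-1 sA; have sdB := lpre_subspace d sB.
split; [exact: addP_subspace | | | exact: capP_subspace].
  by apply: rpre_subspace; apply: capP_subspace.
by apply: lpre_subspace; apply: addP_subspace.
Qed.

Lemma gen_exchange1 :
  subset_of (gen (prodset (sum_rtrans A d) (cap_ltrans d B))) (gen (prodset A B)).
Proof.
apply: gen_min; first exact: gen_subspace.
move=> _ [_ [b [[y [w [Ay [Awd ->]]]] [[Bb Bdb] ->]]]].
rewrite mulrDl; apply: subspace_add; first exact: gen_subspace.
  by apply: gen_mem; exists y, b.
by apply: gen_mem; exists (w * d^-1), (d * b); rewrite mulrA mulrVK.
Qed.

Lemma gen_exchange2 : subset_of
  (gen (prodset (rpre (cap_rtrans A d) d) (lpre d^-1 (sum_ltrans d B))))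
  (gen (prodset A B)).
Proof.
apply: gen_min; first exact: gen_subspace.
move=> _ [a [b [[Aad Aa] [[y [w [By [Bdw Eb]]]] ->]]]].
rewrite /rpre mulrK // in Aa.
have -> : b = d * y + d * w by rewrite -mulrDr -Eb mulVKr.
rewrite mulrDr; apply: subspace_add; first exact: gen_subspace.
  by apply: gen_mem; exists (a * d), y; rewrite mulrA.
by apply: gen_mem; exists a, (d * w).
Qed.

Lemma exchange_dims_left dA : has_dim A dA ->
  exists p q, [/\ has_dim (sum_rtrans A d) p, has_dim (rpre (cap_rtrans A d) d) q
                & (p + q = dA + dA)%N].
Proof.
move=> dimA; have dV_unit : d^-1 \is a GRing.unit by rewrite unitrV.
have [p [q [dim_sum dim_cap eq_pq]]] := grassmann dimA (has_dim_rpre dV_unit dimA).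
by exists p, q; split=> //; apply: has_dim_rpre.
Qed.

Lemma exchange_dims_right dB : has_dim B dB ->
  exists p q, [/\ has_dim (lpre d^-1 (sum_ltrans d B)) p, has_dim (cap_ltrans d B) q
                & (p + q = dB + dB)%N].
Proof.
move=> dimB; have [p [q [dim_sum dim_cap eq_pq]]] :=
  grassmann dimB (has_dim_lpre d_unit dimB).
by exists p, q; split=> //; apply: has_dim_lpre; rewrite ?unitrV.
Qed.

Lemma sum_rtrans_grows dA p : has_dim A dA -> has_dim (sum_rtrans A d) p ->
  ~ subset_of (rpre A d^-1) A -> (dA < p)%N.
Proof.
move=> dimA dimS A'd; apply: has_dim_proper dimA dimS _ _.
  by move=> x Ax; exists x, 0; rewrite addr0 /rpre mul0r; case: sA.
move=> AdA; apply: A'd => x Adx; apply: AdA.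
by exists 0, x; rewrite add0r; case: sA.
Qed.

Lemma sum_ltrans_grows dB p : has_dim B dB -> has_dim (lpre d^-1 (sum_ltrans d B)) p ->
  ~ subset_of (lpre d^-1 B) B -> (dB < p)%N.
Proof.
move=> dimB dimS B'd; apply: has_dim_proper dimB dimS _ _.
  by move=> x Bx; exists 0, (d^-1 * x); rewrite add0r /lpre mulVKr //; case: sB.
move=> dBB; apply: B'd => x Bdx; apply: dBB.
by exists (d^-1 * x), 0; rewrite addr0 /lpre mulr0; case: sB.
Qed.

(* When d = a1^-1 a2 = b1 b2^-1 lies in D, the witnesses a1 and b2 show that
   all four exchanged subspaces are nonzero. *)
Lemma exchange_nonzero : (forall x : L, x != 0 -> x \is a GRing.unit) -> Dset A B d ->
  [/\ nonzero_space (sum_rtrans A d), nonzero_space (rpre (cap_rtrans A d) d),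
      nonzero_space (lpre d^-1 (sum_ltrans d B)) & nonzero_space (cap_ltrans d B)].
Proof.
move=> Ldiv [[a1 [a2 [Aa1 [a1n0 [Aa2 Ea]]]]] [b1 [b2 [Bb1 [Bb2 [b2n0 Eb]]]]]].
split.
- exists a1; split=> //; exists a1, 0; rewrite addr0 /rpre mul0r; split=> //; by case: sA.
- by exists a1; split=> //; split; rewrite /rpre ?mulrK // Ea mulVKr // Ldiv.
- exists b2; split=> //; exists 0, (d^-1 * b2); rewrite add0r /lpre mulVKr //.
  by split=> //; case: sB.
- by exists b2; split=> //; split; rewrite /lpre // Eb mulrVK // Ldiv.
Qed.

End Exchange.

Lemma exchange_arith (a b p1 q1 p2 q2 : nat) :
  (p1 + q1 = a + a)%N -> (p2 + q2 = b + b)%N -> (a < p1)%N \/ (b < p2)%N ->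
  (a + b < p1 + q2)%N \/ (a + b < q1 + p2)%N \/ ((p1 + q2 = a + b)%N /\ (a < p1)%N).
Proof. lia. Qed.

Theorem mainTheorem3 (K : fieldType) (L : unitAlgType K)
  (Ldiv : forall x : L, x != 0 -> x \is a GRing.unit)
  (A B : L -> Prop) (dA dB : nat)
  (sA : is_subspace A) (sB : is_subspace B)
  (hA : has_dim A dA) (hB : has_dim B dB) :
  ~ subset_of (prodset A (Dset A B)) A \/ ~ subset_of (prodset (Dset A B) B) B ->
  exists (A1 B1 : L -> Prop) (dA1 dB1 : nat),
    is_subspace A1 /\ is_subspace B1 /\ has_dim A1 dA1 /\ has_dim B1 dB1 /\
    (nonzero_space A1 /\ nonzero_space B1) /\
    subset_of (gen (prodset A1 B1)) (gen (prodset A B)) /\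
    (((dA1 + dB1 = dA + dB)%N /\ (dA < dA1)%N) \/ (dA + dB < dA1 + dB1)%N).
Proof.
move=> unstable.
have [d [Dd d_unit grows]] := unstable_witness Ldiv sA sB unstable.
have [p1 [q1 [dimA1 dimA2 eqA]]] := exchange_dims_left d_unit hA.
have [p2 [q2 [dimB2 dimB1 eqB]]] := exchange_dims_right d_unit hB.
have [sA1 sA2 sB2 sB1] := exchange_subspaces d sA sB.
have [nzA1 nzA2 nzB2 nzB1] := exchange_nonzero sA sB d_unit Ldiv Dd.
have gen1 := gen_exchange1 (A := A) (B := B) d_unit.
have gen2 := gen_exchange2 (A := A) (B := B) d_unit.
have growth : (dA < p1)%N \/ (dB < p2)%N.
  case: grows => [A'd|B'd]; [left | right].
    exact: (sum_rtrans_grows sA hA dimA1 A'd).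
  exact: (sum_ltrans_grows sB d_unit hB dimB2 B'd).
case: (exchange_arith eqA eqB growth) => [lt1 | [lt2 | tie]].
- by exists (sum_rtrans A d), (cap_ltrans d B), p1, q2; do 6 (split=> //); right.
- exists (rpre (cap_rtrans A d) d), (lpre d^-1 (sum_ltrans d B)), q1, p2.
  by do 6 (split=> //); right.
- by exists (sum_rtrans A d), (cap_ltrans d B), p1, q2; do 6 (split=> //); left.
Qed.
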